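(* Let $\mathfrak L=(L_0,\dots,L_k)$ be a chain of Lagrangian submanifolds of a symplectic manifold $M$ with base point $y$, let $\vec p=(p_{0k},p_{k(k-1)},\dots,p_{10})$ with $p_{(i+1)i}\in L_i\cap L_{i+1}$ (indices mod $k+1$), and let $B\in\pi_2(\mathfrak L;\vec p)$. Then there exist anchors $\gamma_i$ of $L_i$, $i=0,\dots,k$, such that $B$ is admissible with respect to $\mathcal E=((L_0,\gamma_0),\dots,(L_k,\gamma_k))$.
   Context: An anchor of $L$: a path $\gamma$ with $\gamma(0)=y$, $\gamma(1)\in L$. For $i\ne j$, $\ell_{ij}(t)=\gamma_i(1-2t)$ ($t\le1/2$), $\gamma_j(2t-1)$ ($t\ge1/2$). $\pi_2(\mathfrak L;\vec p)$: homotopy classes of maps $v:D^2\to M$ with boundary points $z_{0k},z_{k(k-1)},\dots,z_{10}$ in counterclockwise order such that $v(z_{j(j-1)})=p_{j(j-1)}$ and $v$ maps the counterclockwise boundary arc from $z_{(j+1)j}$ to $z_{j(j-1)}$ into $L_j$. $B$ is admissible with respect to $\mathcal E$ if there exist strips $w^-_{i(i+1)}:[0,1]^2\to M$ ($i=0,\dots,k$) with $w^-_{i(i+1)}(s,0)\in L_i$, $w^-_{i(i+1)}(s,1)\in L_{i+1}$, $w^-_{i(i+1)}(0,t)=p_{(i+1)i}$, $w^-_{i(i+1)}(1,t)=\ell_{i(i+1)}(t)$, such that $B$ is the homotopy class of the disc map obtained by identifying the point $(1,t)$, $t\in[1/2,1]$, of strip $i$ with the point $(1,1-t)$ of strip $i+1$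 and collapsing each edge $\{0\}\times[0,1]$ to a point. *)

From HB Require Import structures.
From mathcomp Require Import all_boot all_order all_algebra.
From mathcomp Require Import all_classical all_reals all_analysis.
From mathcomp Require Import Rstruct Rstruct_topology.
Set Implicit Arguments. Unset Strict Implicit. Unset Printing Implicit Defensive.
Import Order.TTheory GRing.Theory Num.Theory.
Local Open Scope classical_set_scope.
Local Open Scope ring_scope.

Notation RR := Rdefinitions.R.

Definition I01 : set RR := [set x : RR | 0 <= x <= 1].
Definition sq01 : set (RR * RR) := [set st | I01 st.1 /\ I01 st.2].

Definition is_path (M : topologicalType) (g : RR -> M) : Prop :=
  {within I01, continuous g}.

Definition path_connected (M : topologicalType) : Prop :=
  forall a b : M, exists g : RR -> M, is_path g /\ g 0 = a /\ g 1 = b.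

Definition anchor (M : topologicalType) (y : M) (L : set M) (g : RR -> M) : Prop :=
  is_path g /\ g 0 = y /\ L (g 1).

Definition ell (M : topologicalType) (gi gj : RR -> M) (t : RR) : M :=
  if t <= 1 / 2 then gi (1 - 2 * t) else gj (2 * t - 1).

(* Model of the disc D^2 with boundary marked points: k+1 squares [0,1]^2
   (index i : 'I_k.+1), where (1,t), t in [1/2,1], of square i is identified
   with (1,1-t) of square i+1 (mod k+1) and each edge {0}x[0,1] is collapsed
   to a point (the marked point z_{(i+1)i}).  A map from this disc is a
   family of maps on squares compatible with the identifications.
   Here p i stands for p_{(i+1)i} and L i for L_i; ordS i = i+1 mod k+1.
   The boundary arc of the disc carrying L_i consists of the edges
   [0,1]x{0} of square i and [0,1]x{1} of square i-1.
   [disc_map L p v] : v represents an element of pi_2(L; p). *)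
Definition disc_map (k : nat) (M : topologicalType) (L : 'I_k.+1 -> set M)
    (p : 'I_k.+1 -> M) (v : 'I_k.+1 -> RR * RR -> M) : Prop :=
  forall i : 'I_k.+1,
    {within sq01, continuous (v i)} /\
    (forall t, I01 t -> v i (0, t) = p i) /\
    (forall s, I01 s -> L i (v i (s, 0)) /\ L (ordS i) (v i (s, 1))) /\
    (forall t, 1 / 2 <= t <= 1 -> v i (1, t) = v (ordS i) (1, 1 - t)).

Definition disc_homotopic (k : nat) (M : topologicalType) (L : 'I_k.+1 -> set M)
    (p : 'I_k.+1 -> M) (v w : 'I_k.+1 -> RR * RR -> M) : Prop :=
  exists H : 'I_k.+1 -> RR -> RR * RR -> M,
    (forall i, {within [set x : RR * (RR * RR) | I01 x.1 /\ sq01 x.2],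
                 continuous (fun x => H i x.1 x.2)}) /\
    (forall u, I01 u -> disc_map L p (fun i => H i u)) /\
    (forall i x, sq01 x -> H i 0 x = v i x /\ H i 1 x = w i x).

Definition admissible_strips (k : nat) (M : topologicalType) (L : 'I_k.+1 -> set M)
    (p : 'I_k.+1 -> M) (gam : 'I_k.+1 -> RR -> M) (w : 'I_k.+1 -> RR * RR -> M) : Prop :=
  forall i : 'I_k.+1,
    {within sq01, continuous (w i)} /\
    (forall s, I01 s -> L i (w i (s, 0)) /\ L (ordS i) (w i (s, 1))) /\
    (forall t, I01 t -> w i (0, t) = p i /\ w i (1, t) = ell (gam i) (gam (ordS i)) t).

(* the class B of the disc map v is admissible w.r.t. E = ((L_i, gam_i))_i :
   the disc map obtained by gluing some strips w (which in the model above is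
   the family w itself) lies in the class of v *)
Definition admissible (k : nat) (M : topologicalType) (L : 'I_k.+1 -> set M)
    (p : 'I_k.+1 -> M) (gam : 'I_k.+1 -> RR -> M) (v : 'I_k.+1 -> RR * RR -> M) : Prop :=
  exists w, admissible_strips L p gam w /\ disc_homotopic L p w v.

From HB Require Import structures.
From mathcomp Require Import all_boot all_order all_algebra.
From mathcomp Require Import all_classical all_reals all_analysis.
From mathcomp Require Import Rstruct Rstruct_topology.
From mathcomp Require Import lra ring.
Set Implicit Arguments. Unset Strict Implicit. Unset Printing Implicit Defensive.
Import Order.TTheory GRing.Theory Num.Theory.
Local Open Scope classical_set_scope.
Local Open Scope ring_scope.

(* All corners (1, 1/2) of the squares are glued to the centre of the disc, so
   v takes one value c there.  Choose a path d from c to y.  Homotope v by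
   opening, in every square, a band around the midline t = 1/2 of width
   growing to 1/2, squeezing v vertically outside the band and, inside it,
   running along the midline of v and then along d.  At the end of the
   homotopy the right edge of square i, from t = 1/2 down to t = 0, is a path
   from y to L_i: this is the anchor gamma_i, and the right edge of the whole
   square is ell_{i(i+1)}, so the deformed map is the required family of
   strips. *)

Section ContinuityToolkit.
Variables X Y Z : topologicalType.

Lemma continuous_comp_within (A : set Y) (f : Y -> Z) (h : X -> Y) :
  {within A, continuous f} -> continuous h -> (forall x, A (h x)) ->
  continuous (fun x => f (h x)).
Proof.
move=> /subspace_continuousP cf ch hA x.
apply: (@cvg_comp _ _ _ h f _ (within A (nbhs (h x)))); last exact: cf.
move=> B /= hB; have := ch x _ hB; rewrite nbhs_simpl /=.
by apply: filterS => u /(_ (hA u)).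
Qed.

Lemma continuous_if_le0 (phi : X -> RR) (f g : X -> Z) :
  continuous phi -> continuous f -> continuous g ->
  (forall x, phi x = 0 -> f x = g x) ->
  continuous (fun x => if phi x <= 0 then f x else g x).
Proof.
move=> cphi cf cg fg x W; rewrite nbhs_simpl /= => hW.
case: (ltrgtP (phi x) 0) => hx; move: hW.
- rewrite (ltW hx) => /cf hW.
  have neg : \forall u \near x, phi u < 0 by exact: (cphi x _ (lt_nbhsl hx)).
  by near=> u; rewrite /= ifT; [near: u | apply: ltW; near: u].
- rewrite leNgt hx /= => /cg hW.
  have pos : \forall u \near x, 0 < phi u by exact: (cphi x _ (lt_nbhsr hx)).
  by near=> u; rewrite /= ifF; [near: u | apply/negbTE; rewrite -ltNge; near: u].
- rewrite hx lexx => hW.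
  have hf := cf x _ hW.
  have hg : nbhs x (g @^-1` W) by apply: cg; rewrite -(fg x hx).
  by near=> u; rewrite /=; case: ifP => _; near: u.
Unshelve. all: end_near.
Qed.

Lemma continuous_cstf (c : Z) : continuous (fun _ : X => c).
Proof. exact: cst_continuous. Qed.

Lemma continuous_idf : continuous (fun x : X => x).
Proof. by move=> x; exact: cvg_id. Qed.

Lemma continuous_compf (f : X -> Y) (g : Y -> Z) :
  continuous f -> continuous g -> continuous (fun x => g (f x)).
Proof. by move=> cf cg x; apply: continuous_comp; [exact: cf | exact: cg]. Qed.

Lemma continuous_pairf (f : X -> Y) (g : X -> Z) :
  continuous f -> continuous g -> continuous (fun x => (f x, g x)).
Proof. by move=> cf cg x; apply: cvg_pair; [exact: cf | exact: cg]. Qed.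

Lemma continuous_fst : continuous (fun x : X * Y => x.1).
Proof. by move=> x; exact: cvg_fst. Qed.

Lemma continuous_snd : continuous (fun x : X * Y => x.2).
Proof. by move=> x; exact: cvg_snd. Qed.

Lemma continuous_snd_fst : continuous (fun x : X * (Y * Z) => x.2.1).
Proof. by move=> x; apply: continuous_comp; [exact: cvg_snd | exact: cvg_fst]. Qed.

Lemma continuous_snd_snd : continuous (fun x : X * (Y * Z) => x.2.2).
Proof. by move=> x; apply: continuous_comp; [exact: cvg_snd | exact: cvg_snd]. Qed.

Lemma continuous_addf (f g : X -> RR) :
  continuous f -> continuous g -> continuous (fun x => f x + g x).
Proof. by move=> cf cg x; exact: (@continuousD _ RR^o _ f g x (cf x) (cg x)). Qed.

Lemma continuous_oppf (f : X -> RR) : continuous f -> continuous (fun x => - f x).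
Proof. by move=> cf x; exact: (@continuousN _ RR^o _ f x (cf x)). Qed.

Lemma continuous_mulf (f g : X -> RR) :
  continuous f -> continuous g -> continuous (fun x => f x * g x).
Proof. by move=> cf cg x; exact: (continuousM (cf x) (cg x)). Qed.

Lemma continuous_invf (f : X -> RR) :
  continuous f -> (forall x, f x != 0) -> continuous (fun x => (f x)^-1).
Proof. by move=> cf f_neq0 x; exact: (continuousV (f_neq0 x) (cf x)). Qed.

Lemma continuous_minf (f g : X -> RR) :
  continuous f -> continuous g -> continuous (fun x => Num.min (f x) (g x)).
Proof. by move=> cf cg x; exact: (@continuous_min _ _ f g x (cf x) (cg x)). Qed.

Lemma continuous_maxf (f g : X -> RR) :
  continuous f -> continuous g -> continuous (fun x => Num.max (f x) (g x)).
Proof. by move=> cf cg x; exact: (@continuous_max _ _ f g x (cf x) (cg x)). Qed.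

Lemma continuous_normf (f : X -> RR) : continuous f -> continuous (fun x => `|f x|).
Proof.
move=> cf x; apply: (continuous_comp (cf x)).
exact: (@norm_continuous _ RR^o).
Qed.

End ContinuityToolkit.

Definition clamp01 (x : RR) : RR := Num.min 1 (Num.max 0 x).

Lemma clamp01_I01 x : I01 (clamp01 x).
Proof. by rewrite /I01 /clamp01 /= le_min ler01 le_max lexx /= ge_min lexx. Qed.

Lemma clamp01_id x : I01 x -> clamp01 x = x.
Proof. by case/andP=> x_ge0 x_le1; rewrite /clamp01 max_r // min_r. Qed.

Lemma clamp01_idem x : clamp01 (clamp01 x) = clamp01 x.
Proof. exact/clamp01_id/clamp01_I01. Qed.

Lemma clamp01_le1 x : clamp01 x <= 1. Proof. by case/andP: (clamp01_I01 x). Qed.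

Lemma clamp01_0 : clamp01 0 = 0. Proof. by rewrite clamp01_id // /I01 /= lexx ler01. Qed.
Lemma clamp01_1 : clamp01 1 = 1. Proof. by rewrite clamp01_id // /I01 /= lexx ler01. Qed.
Lemma clamp01_half : clamp01 (1/2) = 1/2. Proof. by rewrite clamp01_id // /I01 /=; lra. Qed.

Lemma continuous_clamp01 : continuous clamp01.
Proof.
apply: continuous_minf; first exact: continuous_cstf.
by apply: continuous_maxf; [exact: continuous_cstf | exact: continuous_idf].
Qed.

Lemma continuous_clamp01f (X : topologicalType) (f : X -> RR) :
  continuous f -> continuous (fun x => clamp01 (f x)).
Proof. by move=> cf; apply: continuous_compf cf continuous_clamp01. Qed.

Ltac continuity := repeat match goal with
  | |- continuous (fun _ => ?c) => exact: continuous_cstf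
  | |- continuous (fun x => x) => exact: continuous_idf
  | |- continuous fst => exact: continuous_fst
  | |- continuous snd => exact: continuous_snd
  | |- continuous (fun x => x.1) => exact: continuous_fst
  | |- continuous (fun x => x.2) => exact: continuous_snd
  | |- continuous (fun x => x.2.1) => exact: continuous_snd_fst
  | |- continuous (fun x => x.2.2) => exact: continuous_snd_snd
  | |- continuous (fun x => (_, _)) => apply: continuous_pairf
  | |- continuous (fun x => _ + _) => apply: continuous_addf
  | |- continuous -%R => apply: continuous_oppf; exact: continuous_idf
  | |- continuous (fun x => - _) => apply: continuous_oppf
  | |- continuous (fun x => _ * _) => apply: continuous_mulf
  | |- continuous (fun x => Num.min _ _) => apply: continuous_minf
  | |- continuous (fun x => Num.max _ _) => apply: continuous_maxf
  | |- continuous (fun x => `|_|) => apply: continuous_normf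
  | |- continuous clamp01 => exact: continuous_clamp01
  | |- continuous (fun x => clamp01 _) => apply: continuous_clamp01f
  end.

(* Squeezes [0, 1/2 - a/4] onto [0, 1/2] and [1/2 + a/4, 1] onto [1/2, 1],
   collapsing the band in between to 1/2. *)
Definition squeeze (a t : RR) : RR :=
  1/2 + (t - 1/2 - Num.max (- (a / 4)) (Num.min (a / 4) (t - 1/2))) / (1 - a / 2).

Lemma squeeze0 a : I01 a -> squeeze a 0 = 0.
Proof.
case/andP=> a_ge0 a_le1; rewrite /squeeze min_r; last by lra.
by rewrite max_l; [field; lra | lra].
Qed.

Lemma squeeze1 a : I01 a -> squeeze a 1 = 1.
Proof.
case/andP=> a_ge0 a_le1; rewrite /squeeze min_l; last by lra.
by rewrite max_r; [field; lra | lra].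
Qed.

Lemma squeeze_band a t : `|t - 1/2| = a / 4 -> squeeze a t = 1/2.
Proof.
move=> band; have: `|t - 1/2| <= a / 4 by rewrite band.
rewrite ler_norml => /andP[lo hi].
by rewrite /squeeze min_r // max_r // subrr mul0r addr0.
Qed.

Lemma squeeze_id t : squeeze 0 t = t.
Proof.
rewrite /squeeze mul0r oppr0 (@max_l _ _ 0) ?ge_min ?lexx //.
by field.
Qed.

Lemma squeeze_sym a t : I01 a -> 1/2 + a/4 < t -> squeeze a (1 - t) = 1 - squeeze a t.
Proof.
case/andP=> a_ge0 a_le1 ht; rewrite /squeeze min_r; last by lra.
rewrite max_l; last by lra.
rewrite min_l; last by lra.
by rewrite max_r; [field; lra | lra].
Qed.

Lemma squeeze_upper a t : I01 a -> 1/2 + a/4 < t <= 1 -> 1/2 <= squeeze a t <= 1.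
Proof.
case/andP=> a_ge0 a_le1 /andP[t_gt t_le1].
rewrite /squeeze min_l; last by lra.
rewrite max_r; last by lra.
have le_half : (t - 1/2 - a/4) / (1 - a/2) <= 1/2 by rewrite ler_pdivrMr; lra.
have ge0 : 0 <= (t - 1/2 - a/4) / (1 - a/2) by apply: divr_ge0; lra.
by apply/andP; split; lra.
Qed.

Section Whisker.
Variables (M : topologicalType) (f : RR * RR -> M) (d : RR -> M).

Definition sq_extend (z : RR * RR) : M := f (clamp01 z.1, clamp01 z.2).

Definition midline_then_path (r : RR) : M :=
  if r - 1 <= 0 then f (clamp01 r, 1/2) else d (clamp01 (r - 1)).

(* All arguments are clamped into [0, 1], which makes the homotopy continuous on
   the whole space rather than only within the cube.  At time a the band
   |t - 1/2| <= a/4 runs along midline_then_path and reaches d 1 at (1, 1/2)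
   when a = 1. *)
Definition whisker (a : RR) (z : RR * RR) : M :=
  let a := clamp01 a in let s := clamp01 z.1 in
  if `|z.2 - 1/2| - a / 4 <= 0 then midline_then_path (s + s * (a - 4 * `|z.2 - 1/2|))
  else sq_extend (s, squeeze a z.2).

Hypothesis f_cont : {within sq01, continuous f}.
Hypothesis d_path : is_path d.
Hypothesis d_start : d 0 = f (1, 1/2).

Lemma continuous_sq_extend : continuous sq_extend.
Proof.
apply: (continuous_comp_within f_cont); first by continuity.
by move=> z; split; exact: clamp01_I01.
Qed.

Lemma continuous_midline_then_path : continuous midline_then_path.
Proof.
apply: continuous_if_le0; first by continuity.
- apply: (continuous_comp_within f_cont); first by continuity.
  by move=> r; split; [exact: clamp01_I01 | rewrite /I01 /=; lra].
- apply: (continuous_comp_within d_path); first by continuity.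
  by move=> r; exact: clamp01_I01.
- move=> r /eqP; rewrite subr_eq0 => /eqP ->.
  by rewrite subrr clamp01_0 clamp01_1 d_start.
Qed.

Lemma continuous_whisker : continuous (fun x : RR * (RR * RR) => whisker x.1 x.2).
Proof.
apply: continuous_if_le0; first by continuity.
- by apply: (continuous_compf _ continuous_midline_then_path); continuity.
- apply: (continuous_compf _ continuous_sq_extend); rewrite /squeeze; continuity.
  apply: continuous_invf; first by continuity.
  by move=> x; apply/eqP; have := clamp01_le1 x.1; lra.
- move=> x /eqP; rewrite subr_eq0 => /eqP band.
  have -> : clamp01 x.1 - 4 * `|x.2.2 - 1/2| = 0 by rewrite band; field.
  rewrite mulr0 addr0 /midline_then_path ifT ?subr_le0 ?clamp01_le1 //.
  by rewrite /sq_extend /= squeeze_band // clamp01_half clamp01_id //; exact: clamp01_I01.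
Qed.

Lemma whisker_left (q : M) a t :
  (forall t, I01 t -> f (0, t) = q) -> whisker a (0, t) = q.
Proof.
move=> f_left; rewrite /whisker /= clamp01_0 mul0r addr0.
case: ifP => _; last by rewrite /sq_extend /= clamp01_0 f_left //; exact: clamp01_I01.
rewrite /midline_then_path ifT; last by rewrite sub0r oppr_le0 ler01.
by rewrite clamp01_0 f_left // /I01 /=; lra.
Qed.

Lemma whisker_bottom a s : whisker a (s, 0) = f (clamp01 s, 0).
Proof.
have /andP[a_ge0 a_le1] := clamp01_I01 a.
rewrite /whisker /= sub0r normrN ger0_norm; last by lra.
rewrite ifF; last by apply/negbTE; rewrite -ltNge; lra.
by rewrite /sq_extend /= clamp01_idem (squeeze0 (clamp01_I01 a)) clamp01_0.
Qed.

Lemma whisker_top a s : whisker a (s, 1) = f (clamp01 s, 1).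
Proof.
have /andP[a_ge0 a_le1] := clamp01_I01 a.
rewrite /whisker /= ger0_norm; last by lra.
rewrite ifF; last by apply/negbTE; rewrite -ltNge; lra.
by rewrite /sq_extend /= clamp01_idem (squeeze1 (clamp01_I01 a)) clamp01_1.
Qed.

Lemma whisker0 z : sq01 z -> whisker 0 z = f z.
Proof.
case: z => s t [hs ht]; rewrite /whisker /= clamp01_0 mul0r subr0 (clamp01_id hs).
case: ifP => band.
  have: `|t - 1/2| = 0 by apply/eqP; rewrite eq_le band normr_ge0.
  move/eqP; rewrite normr_eq0 subr_eq0 => /eqP ->.
  rewrite subrr normr0 mulr0 subr0 mulr0 addr0 /midline_then_path ifT.
    by rewrite clamp01_id.
  by move: hs; rewrite /I01 /=; lra.
by rewrite /sq_extend /= squeeze_id !clamp01_id.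
Qed.

Lemma whisker1_centre : whisker 1 (1, 1/2) = d 1.
Proof.
rewrite /whisker /= clamp01_1 subrr normr0 mulr0 subr0 mulr1 ifT; last by lra.
rewrite /midline_then_path ifF; last by apply/negbTE; rewrite -ltNge; lra.
have -> : 1 + 1 - 1 = 1 :> RR by lra.
by rewrite clamp01_1.
Qed.

End Whisker.

Lemma whisker_glue (M : topologicalType) (f g : RR * RR -> M) (d : RR -> M) a t :
  (forall t, 1/2 <= t <= 1 -> f (1, t) = g (1, 1 - t)) ->
  1/2 <= t <= 1 -> whisker f d a (1, t) = whisker g d a (1, 1 - t).
Proof.
move=> fg /andP[t_ge t_le1].
have /andP[a_ge0 a_le1] := clamp01_I01 a.
have norm_sym : `|1 - t - 1/2| = t - 1/2.
  by rewrite -normrN ger0_norm; lra.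
rewrite /whisker /= norm_sym ger0_norm; last by lra.
rewrite clamp01_1; set b := clamp01 a in a_ge0 a_le1 *.
case: ifP => band.
  rewrite /midline_then_path; case: ifP => // inner.
  have -> : 1 + 1 * (b - 4 * (t - 1/2)) = 1 by lra.
  by rewrite clamp01_1 fg; [congr g; congr pair; lra | lra].
move/negbT: band; rewrite -ltNge => band.
have hb : I01 b by exact: clamp01_I01.
have up : 1/2 + b/4 < t by lra.
rewrite /sq_extend /= clamp01_1 squeeze_sym //.
have /andP[sq_ge sq_le1] := squeeze_upper hb (introT andP (conj up t_le1)).
by rewrite !clamp01_id ?fg // /I01 /=; apply/andP; split; lra.
Qed.

Lemma disc_map_centre (M : topologicalType) (k : nat) (L : 'I_k.+1 -> set M)
    (p : 'I_k.+1 -> M) (v : 'I_k.+1 -> RR * RR -> M) i :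
  disc_map L p v -> v (ordS i) (1, 1/2) = v i (1, 1/2).
Proof.
move=> /(_ i) [_ [_ [_ glue]]]; rewrite glue; last by lra.
by congr v; congr pair; lra.
Qed.

Section WhiskerDisc.
Variables (M : topologicalType) (k : nat) (L : 'I_k.+1 -> set M) (p : 'I_k.+1 -> M).
Variables (v : 'I_k.+1 -> RR * RR -> M) (d : 'I_k.+1 -> RR -> M).
Hypothesis v_disc : disc_map L p v.
Hypothesis d_path : forall i, is_path (d i).
Hypothesis d_start : forall i, d i 0 = v i (1, 1/2).
Hypothesis d_ordS : forall i, d (ordS i) = d i.

Definition whisker_disc (a : RR) (i : 'I_k.+1) : RR * RR -> M := whisker (v i) (d i) a.

Definition whisker_anchor (i : 'I_k.+1) (r : RR) : M := whisker_disc 1 i (1, (1 - r) / 2).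

Lemma continuous_whisker_disc i :
  continuous (fun x : RR * (RR * RR) => whisker_disc x.1 i x.2).
Proof.
rewrite /whisker_disc.
exact: continuous_whisker (proj1 (v_disc i)) (@d_path i) (d_start i).
Qed.

Lemma continuous_whisker_disc_at a i : continuous (whisker_disc a i).
Proof.
have slice : continuous (fun z : RR * RR => (a, z)) by continuity.
exact: continuous_compf slice (@continuous_whisker_disc i).
Qed.

Lemma disc_map_whisker a : disc_map L p (whisker_disc a).
Proof.
move=> i; have [_ [v_left [v_LL v_glue]]] := v_disc i.
split; first exact/continuous_subspaceT/continuous_whisker_disc_at.
split; first by move=> t _; apply: whisker_left => t' /v_left.
split.
  by move=> s s01; rewrite /whisker_disc whisker_bottom whisker_top clamp01_id //; exact: v_LL.
by move=> t t_hi; rewrite /whisker_disc d_ordS; exact: whisker_glue v_glue t_hi.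
Qed.

Lemma disc_homotopic_whisker : disc_homotopic L p (whisker_disc 1) v.
Proof.
exists (fun i u => whisker_disc (1 - u) i); split.
  move=> i; apply: continuous_subspaceT.
  have reverse : continuous (fun x : RR * (RR * RR) => (1 - x.1, x.2)) by continuity.
  exact: continuous_compf reverse (@continuous_whisker_disc i).
split; first by move=> u _; exact: disc_map_whisker.
by move=> i z z01; rewrite subr0 subrr /whisker_disc whisker0.
Qed.

Lemma admissible_strips_whisker :
  admissible_strips L p whisker_anchor (whisker_disc 1).
Proof.
move=> i; have [w_cont [w_left [w_LL w_glue]]] := disc_map_whisker 1 i.
do 2!split => //; move=> t t01; split; first exact: w_left.
rewrite /ell /whisker_anchor; case: ifP => t_lo.
  by congr whisker_disc; congr pair; field.
have -> : (1 - (2 * t - 1)) / 2 = 1 - t by field.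
by apply: w_glue; move: t_lo t01; rewrite /I01 /= => /negbT; rewrite -ltNge; lra.
Qed.

Lemma anchor_whisker y i : d i 1 = y -> anchor y (L i) (whisker_anchor i).
Proof.
move=> d_end; split.
  apply: continuous_subspaceT.
  by apply: (continuous_compf _ (@continuous_whisker_disc_at 1 i)); continuity.
rewrite /whisker_anchor; split.
  have -> : (1 - 0) / 2 = 1/2 :> RR by lra.
  by rewrite /whisker_disc whisker1_centre.
have -> : (1 - 1) / 2 = 0 :> RR by lra.
rewrite /whisker_disc whisker_bottom clamp01_1.
by have [_ [_ [/(_ 1) v_LL _]]] := v_disc i; apply: (proj1 (v_LL _)); rewrite /I01 /=; lra.
Qed.

End WhiskerDisc.

Theorem mainTheorem8 (M : topologicalType) (hM : path_connected M) (y : M)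
    (k : nat) (L : 'I_k.+1 -> set M) (p : 'I_k.+1 -> M)
    (hp : forall i : 'I_k.+1, L i (p i) /\ L (ordS i) (p i))
    (v : 'I_k.+1 -> RR * RR -> M) (hv : disc_map L p v) :
  exists gam : 'I_k.+1 -> RR -> M,
    (forall i, anchor y (L i) (gam i)) /\ admissible L p gam v.
Proof.
have [D hD] := choice (fun a => hM a y).
pose d i := D (v i (1, 1/2)).
have d_path i : is_path (d i) by have [] := hD (v i (1, 1/2)).
have d_start i : d i 0 = v i (1, 1/2) by have [_ []] := hD (v i (1, 1/2)).
have d_end i : d i 1 = y by have [_ []] := hD (v i (1, 1/2)).
have d_ordS i : d (ordS i) = d i by rewrite /d (disc_map_centre _ hv).
exists (whisker_anchor v d); split.
  by move=> i; apply: anchor_whisker.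
exists (whisker_disc v d 1); split.
  exact: admissible_strips_whisker.
exact: disc_homotopic_whisker.
Qed.
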